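(* Let $f$ be any function of unitation on $\{0,1\}^n$. Consider the $(\mu+1)$ EA with phenotypic clearing with clearing radius $\sigma=1$, niche capacity $\kappa\in\mathbb{N}$ and population size $\mu\geq (n+1)\cdot\kappa$ on $f$. Then winners are never removed from the population, i.e., if $x\in P_t$ is a winner then $x\in P_{t+1}$.
   Context: A function of unitation is $f:\{0,1\}^n\to\mathbb{R}$ with $f(x)=u(|x|_1)$ for some $u:\{0,\dots,n\}\to\mathbb{R}^+$, where $|x|_1$ is the number of 1-bits of $x$; fitness values are assumed positive. The $(\mu+1)$ EA with clearing (population size $\mu$, clearing radius $\sigma$, niche capacity $\kappa$, distance function $\mathrm{d}$): $P_0$ consists of $\mu$ bit strings chosen independently and uniformly at random. In generation $t$: choose a parent $x\in P_t$ uniformly at random; create $y$ by flipping each bit of $x$ independently with probability $1/n$; let $P_t^*=P_t\cup\{y\}$; update the fitness values of $P_t^*$ by the clearing procedure: sort $P_t^*$ by decreasing fitness; for $i=1,\dots,|P_t^*|$, if the current fitness of $P[i]$ is positive, set $w:=1$ and for $j=i+1,\dots,|P_t^*|$: if the current fitness of $P[j]$ is positive and $\mathrm{d}(P[i],P[j])<\sigma$ then, if $w<\kappa$ set $w:=w+1$, else set the fitness of $P[j]$ to $0$. Individuals whose fitness is not reset to $0$ are winners, the others are cleared. Then choose $z\in P_t$ with worst (cleared) fitness uniformly at random; if the (cleared) fitness of $y$ is at least that of $z$, set $P_{t+1}=P_t^*\setminus\{z\}$, otherwise $P_{t+1}=P_t^*\setminus\{y\}$. Phenotypic clearing uses $\mathrm{d}(x,y)=\big||x|_1-|y|_1\big|$.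 *)

From mathcomp Require Import all_boot all_order all_algebra.
Set Implicit Arguments. Unset Strict Implicit. Unset Printing Implicit Defensive.
Import Order.TTheory GRing.Theory Num.Theory.
Local Open Scope ring_scope.

Definition bitstring (n : nat) := (n.-tuple bool)%type.

Definition ones n (x : bitstring n) : nat := count id x.

Definition unitation {R : numDomainType} n (u : nat -> R) (x : bitstring n) : R :=
  u (ones x).

Definition pheno_dist n (x y : bitstring n) : nat :=
  ((ones x - ones y) + (ones y - ones x))%N.

(* One iteration i of the outer loop of the clearing procedure, operating on
   the sorted population Q (positions 0..m-1) with current fitness vector fit:
   if fit i > 0, set w := 1 and for j = i+1..m-1, if fit j > 0 and
   d(Q i, Q j) < sigma then (if w < kappa then w := w+1 else fit j := 0). *)
Definition clear_step {R : numDomainType} {T : Type} (d : T -> T -> nat)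
    (sigma kappa m : nat) (Q : nat -> T) (fit : nat -> R) (i : nat) : nat -> R :=
  if 0 < fit i then
    (foldl (fun (st : (nat -> R) * nat) j =>
        let: (f, w) := st in
        if (0 < f j) && (d (Q i) (Q j) < sigma)%N then
          (if (w < kappa)%N then (f, w.+1)
           else ((fun k => if k == j then 0 else f k), w))
        else (f, w))
      (fit, 1%N) (iota i.+1 (m - i.+1))).1
  else fit.

Definition clearing {R : numDomainType} {T : Type} (d : T -> T -> nat)
    (sigma kappa m : nat) (Q : nat -> T) (fit : nat -> R) : nat -> R :=
  foldl (clear_step d sigma kappa m Q) fit (iota 0 m).

(* P_t^star = P_t ∪ {y}: the offspring y gets index mu = size Pt. *)
Definition pstar n (Pt : seq (bitstring n)) (y : bitstring n) := rcons Pt y.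

Definition ind n (Pt : seq (bitstring n)) (y : bitstring n) (k : nat) :=
  nth y (pstar Pt y) k.

(* idx is a valid sorting of P_t^star by decreasing fitness (ties broken
   arbitrarily): a permutation of the indices 0..mu whose fitness values are
   nonincreasing along the list. *)
Definition sorting_order {R : numDomainType} n (u : nat -> R)
    (Pt : seq (bitstring n)) (y : bitstring n) (idx : seq nat) : Prop :=
  perm_eq idx (iota 0 (size Pt).+1) /\
  sorted (fun a b => unitation u (ind Pt y b) <= unitation u (ind Pt y a)) idx.

Definition cleared_fit {R : numDomainType} n (u : nat -> R) (sigma kappa : nat)
    (Pt : seq (bitstring n)) (y : bitstring n) (idx : seq nat) (k : nat) : R :=
  clearing (@pheno_dist n) sigma kappa (size Pt).+1
    (fun i => ind Pt y (nth 0%N idx i))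
    (fun i => unitation u (ind Pt y (nth 0%N idx i)))
    (index k idx).

(* Index (in P_t^star) of the individual removed in the replacement step, given
   the chosen worst individual z of P_t: z if cf(y) >= cf(z), else y. *)
Definition removed_index {R : numDomainType} n (u : nat -> R) (sigma kappa : nat)
    (Pt : seq (bitstring n)) (y : bitstring n) (idx : seq nat) (z : nat) : nat :=
  if cleared_fit u sigma kappa Pt y idx z <= cleared_fit u sigma kappa Pt y idx (size Pt)
  then z else size Pt.

Definition next_pop {R : numDomainType} n (u : nat -> R) (sigma kappa : nat)
    (Pt : seq (bitstring n)) (y : bitstring n) (idx : seq nat) (z : nat)
    : seq (bitstring n) :=
  [seq ind Pt y k | k <- iota 0 (size Pt).+1 &
                    k != removed_index u sigma kappa Pt y idx z].

From mathcomp Require Import all_boot all_order all_algebra.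
From mathcomp Require Import zify.
Set Implicit Arguments. Unset Strict Implicit. Unset Printing Implicit Defensive.
Import Order.TTheory GRing.Theory Num.Theory.
Local Open Scope ring_scope.

(** Clearing keeps at most [kappa] winners in every niche.  With [sigma = 1] the
    niches of phenotypic clearing are the [n + 1] unitation levels, so at most
    [(n + 1) kappa <= mu] of the [mu + 1] individuals of P_t^* are winners.
    If a winner [x] were removed, then [x] would be the chosen worst individual
    of P_t and the offspring would be at least as fit, so every individual of
    P_t^* would be a winner: a contradiction. *)

Section Clearing.
Variables (R : numDomainType) (T : Type) (d : T -> T -> nat) (sigma kappa : nat).
Variable Q : nat -> T.

(* Convertible to the inner-loop body of [clear_step]. *)
Definition clear_update (i : nat) (st : (nat -> R) * nat) (j : nat) :=
  let: (f, w) := st in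
  if (0 < f j) && (d (Q i) (Q j) < sigma)%N then
    (if (w < kappa)%N then (f, w.+1)
     else ((fun k => if k == j then 0 else f k), w))
  else (f, w).

Lemma clear_update_notin i st j p : p != j -> (clear_update i st j).1 p = st.1 p.
Proof.
case: st => f w /= /negPf pj.
by case: ifP => // _; case: ifP => //= _; rewrite pj.
Qed.

Lemma clear_update_pos i st j p : 0 < (clear_update i st j).1 p -> 0 < st.1 p.
Proof.
case: st => f w /=; case: ifP => // _; case: ifP => //= _.
by case: eqP => // _; rewrite ltxx.
Qed.

Lemma clear_loop_notin i st js p :
  p \notin js -> (foldl (clear_update i) st js).1 p = st.1 p.
Proof.
elim: js st => //= j js IH st; rewrite in_cons negb_or => /andP[pj /IH ->].
exact: clear_update_notin.
Qed.

Lemma clear_loop_pos i st js p :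
  0 < (foldl (clear_update i) st js).1 p -> 0 < st.1 p.
Proof. by elim: js st => //= j js IH st /IH /clear_update_pos. Qed.

Lemma clear_loop_count i st js : uniq js -> (st.2 <= kappa)%N ->
  (count (fun j => (0 < (foldl (clear_update i) st js).1 j)%R
                   && (d (Q i) (Q j) < sigma)%N) js <= kappa - st.2)%N.
Proof.
elim: js st => // j js IH [f w] /= /andP[jNjs js_uniq] w_le.
rewrite clear_loop_notin //.
have := IH (clear_update i (f, w) j) js_uniq.
rewrite /clear_update; case: ifP => [/andP[fj ->]|fNj]; last by rewrite fNj; apply.
case: ifP => w_lt /=; first by rewrite fj; move/(_ w_lt); lia.
by rewrite eqxx ltxx; apply.
Qed.

Variables (m : nat) (fit : nat -> R).

Lemma clear_step_pos (F : nat -> R) i p :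
  0 < clear_step d sigma kappa m Q F i p -> 0 < F p.
Proof. by rewrite /clear_step; case: ifP => // _ /clear_loop_pos. Qed.

Lemma clear_step_niche (F : nat -> R) i : (0 < kappa)%N -> 0 < F i ->
  (count (fun j => (0 < clear_step d sigma kappa m Q F i j)%R
                   && (d (Q i) (Q j) < sigma)%N) (iota i.+1 (m - i.+1))
    <= kappa.-1)%N.
Proof.
move=> kappa_gt0 Fi; rewrite /clear_step Fi.
have := @clear_loop_count i (F, 1%N) _ (iota_uniq i.+1 (m - i.+1)) kappa_gt0.
by rewrite subn1.
Qed.

Definition partial_clearing t := foldl (clear_step d sigma kappa m Q) fit (iota 0 t).

Lemma partial_clearingS t :
  partial_clearing t.+1 = clear_step d sigma kappa m Q (partial_clearing t) t.
Proof. by rewrite /partial_clearing -addn1 iotaD foldl_cat. Qed.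

Lemma partial_clearing_pos t1 t2 p : (t1 <= t2)%N ->
  0 < partial_clearing t2 p -> 0 < partial_clearing t1 p.
Proof.
move/subnKC <-; elim: (t2 - t1)%N => [|t IH]; first by rewrite addn0.
by rewrite addnS partial_clearingS => /clear_step_pos /IH.
Qed.

Section Niches.
Variable niche : nat -> nat.
Hypothesis close_niche : forall i j, (d (Q i) (Q j) < sigma)%N = (niche i == niche j).

(* The first winner [i] of a niche is still uncleared when the outer loop
   reaches it, and every later winner of its niche survived step [i]. *)
Lemma clearing_niche_le v : (0 < kappa)%N ->
  (count (fun p => (0 < clearing d sigma kappa m Q fit p)%R && (niche p == v))
     (iota 0 m) <= kappa)%N.
Proof.
move=> kappa_gt0; set a := fun p => _ && _.
have [/hasP a_ex|] := boolP (has a (iota 0 m)); last by rewrite has_count; lia.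
have {a_ex} : exists i, (i < m)%N && a i.
  by case: a_ex => i; rewrite mem_iota => /andP[_ i_lt] ai; exists i; rewrite i_lt.
case/ex_minnP=> i /andP[i_lt /andP[i_win /eqP i_v]] i_min.
have -> : iota 0 m = iota 0 i ++ i :: iota i.+1 (m - i.+1).
  by rewrite [in LHS](_ : m = i + (m - i.+1).+1)%N ?iotaD //; lia.
rewrite count_cat /=.
have -> : count a (iota 0 i) = 0%N.
  apply/eqP; rewrite -leqn0 leqNgt -has_count; apply/hasPn => p.
  rewrite mem_iota => /andP[_ p_lt]; apply/negP => ap.
  by have := i_min p; rewrite (ltn_trans p_lt i_lt) ap => /(_ isT); lia.
have i_pos : 0 < partial_clearing i i := partial_clearing_pos (ltnW i_lt) i_win.
have := clear_step_niche kappa_gt0 i_pos; rewrite -partial_clearingS.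
have : (count a (iota i.+1 (m - i.+1)) <=
        count (fun j => (0 < partial_clearing i.+1 j)%R && (d (Q i) (Q j) < sigma)%N)
          (iota i.+1 (m - i.+1)))%N.
  apply: sub_count => p /andP[p_win /eqP p_v].
  by rewrite close_niche p_v i_v eqxx (partial_clearing_pos _ p_win).
by case: (a i); lia.
Qed.

Lemma clearing_winners_le N : (0 < kappa)%N -> (forall p, niche p < N)%N ->
  (count (fun p => 0 < clearing d sigma kappa m Q fit p)%R (iota 0 m) <= N * kappa)%N.
Proof.
move=> kappa_gt0 niche_lt; set w := fun p => (0 < _)%R.
suff count_lt M : (count (fun p => w p && (niche p < M)%N) (iota 0 m) <= M * kappa)%N.
  by rewrite -(eq_count (a1 := fun p => w p && (niche p < N)%N)) ?count_lt // => p;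
     rewrite niche_lt andbT.
elim: M => [|M IH].
  by rewrite (eq_count (a2 := pred0)) ?count_pred0 // => p; rewrite andbF.
have -> : count (fun p => w p && (niche p < M.+1)%N) (iota 0 m) =
          count (predU (fun p => w p && (niche p < M)%N) (fun p => w p && (niche p == M)))
            (iota 0 m).
  by apply: eq_count => p /=; rewrite ltnS leq_eqVlt -andb_orr orbC.
have := count_predUI (fun p => w p && (niche p < M)%N) (fun p => w p && (niche p == M))
  (iota 0 m).
have niche_M : (count (fun p => w p && (niche p == M)) (iota 0 m) <= kappa)%N :=
  clearing_niche_le M kappa_gt0.
rewrite mulSn; lia.
Qed.

End Niches.
End Clearing.


Lemma pheno_dist_lt1 n (x y : bitstring n) : (pheno_dist x y < 1)%N = (ones x == ones y).
Proof. by rewrite /pheno_dist; apply/idP/eqP; lia. Qed.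

Lemma ones_le n (x : bitstring n) : (ones x <= n)%N.
Proof. by rewrite -[X in (_ <= X)%N](size_tuple x) count_size. Qed.

Lemma pheno_clearing_winners_le (R : numDomainType) n kappa m
    (Q : nat -> bitstring n) (fit : nat -> R) : (0 < kappa)%N ->
  (count (fun p => 0 < clearing (@pheno_dist n) 1 kappa m Q fit p)%R (iota 0 m)
    <= n.+1 * kappa)%N.
Proof.
move=> kappa_gt0.
apply: (clearing_winners_le m fit (fun i j => pheno_dist_lt1 (Q i) (Q j))) => // p.
by rewrite ltnS ones_le.
Qed.

Lemma all_winners_size_le (R : numDomainType) n (u : nat -> R) kappa
    (Pt : seq (bitstring n)) y idx :
  sorting_order u Pt y idx -> (0 < kappa)%N ->
  (forall j, (j <= size Pt)%N -> 0 < cleared_fit u 1 kappa Pt y idx j) ->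
  ((size Pt).+1 <= n.+1 * kappa)%N.
Proof.
move=> [perm_idx _] kappa_gt0 all_win.
have size_idx : size idx = (size Pt).+1 by rewrite (perm_size perm_idx) size_iota.
have uniq_idx : uniq idx by rewrite (perm_uniq perm_idx) iota_uniq.
have := pheno_clearing_winners_le (size Pt).+1 (fun i => ind Pt y (nth 0%N idx i))
  (fun i => unitation u (ind Pt y (nth 0%N idx i))) kappa_gt0.
rewrite (eq_in_count (a2 := predT)) ?count_predT ?size_iota // => p.
rewrite mem_iota add0n => p_lt.
have : nth 0%N idx p \in iota 0 (size Pt).+1.
  by rewrite -(perm_mem perm_idx) mem_nth ?size_idx.
rewrite mem_iota add0n ltnS => /all_win.
by rewrite /cleared_fit index_uniq ?size_idx.
Qed.

Lemma mem_next_pop (R : numDomainType) n (u : nat -> R) sigma kappa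
    (Pt : seq (bitstring n)) y idx z k :
  (k < size Pt)%N -> k != removed_index u sigma kappa Pt y idx z ->
  nth y Pt k \in next_pop u sigma kappa Pt y idx z.
Proof.
move=> k_lt k_kept; apply/mapP; exists k.
  by rewrite mem_filter k_kept mem_iota add0n ltnS (ltnW k_lt).
by rewrite /ind /pstar nth_rcons k_lt.
Qed.

Unset Implicit Arguments.

Theorem lemma1 (R : realFieldType) (n : nat) (u : nat -> R) (kappa mu : nat)
    (Pt : seq (bitstring n)) (y : bitstring n) (idx : seq nat) (z k : nat) :
  (forall i, (i <= n)%N -> 0 < u i) ->
  (0 < kappa)%N ->
  (n.+1 * kappa <= mu)%N ->
  size Pt = mu ->
  sorting_order u Pt y idx ->
  (z < mu)%N ->
  (forall j, (j < mu)%N ->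
     cleared_fit u 1 kappa Pt y idx z <= cleared_fit u 1 kappa Pt y idx j) ->
  (k < mu)%N ->
  0 < cleared_fit u 1 kappa Pt y idx k ->
  k != removed_index u 1 kappa Pt y idx z /\
  nth y Pt k \in next_pop u 1 kappa Pt y idx z.
Proof.
move=> _ kappa_gt0 mu_ge size_Pt; subst mu => sort_idx _ z_min k_lt k_win.
have k_kept : k != removed_index u 1 kappa Pt y idx z.
  rewrite /removed_index; case: ifPn => [y_ge_z|_]; last by rewrite ltn_eqF.
  apply/eqP => k_z; move: k_win; rewrite k_z => z_win.
  have all_win j : (j <= size Pt)%N -> 0 < cleared_fit u 1 kappa Pt y idx j.
    rewrite leq_eqVlt => /orP[/eqP -> | j_lt]; first exact: lt_le_trans y_ge_z.
    exact: lt_le_trans z_win (z_min j j_lt).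
  by have := all_winners_size_le sort_idx kappa_gt0 all_win; lia.
by split; last exact: mem_next_pop.
Qed.
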